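(* Let $p>1$, let $\varphi:\mathbb{R}^n\to\mathbb{R}\cup\{+\infty\}$ be proper and lower semicontinuous. Then: (a) for each $\gamma>0$, $\inf_{y}\varphi^p_\gamma(y)=\inf_y\varphi(y)$; (b) for $\gamma>0$, if $\operatorname{prox}^p_{\gamma\varphi}(x)\neq\emptyset$ for every $x\in\mathbb{R}^n$ and $\inf_y\varphi(y)\neq-\infty$, then $\operatorname{argmin}\varphi^p_\gamma=\operatorname{argmin}\varphi$; (c) if $\varphi$ is high-order prox-bounded with threshold $\gamma^{\varphi,p}>0$ and $\inf\varphi\neq-\infty$, then for each $\gamma\in(0,\gamma^{\varphi,p})$, $\operatorname{argmin}\varphi^p_\gamma=\operatorname{argmin}\varphi$; (d) for each $\gamma>0$, $\operatorname{argmin}\varphi\subseteq\mathrm{Fix}(\operatorname{prox}^p_{\gamma\varphi})\subseteq\mathrm{Fcrit}(\varphi)\subseteq\mathrm{Mcrit}(\varphi)$; (e) if $\varphi$ is high-order prox-bounded with threshold $\gamma^{\varphi,p}>0$ and $\inf\varphi\neq-\infty$, then for each $\gamma\in(0,\gamma^{\varphi,p})$, $\operatorname{argmin}\varphi\subseteq\mathrm{Fcrit}(\varphi^p_\gamma)\subseteq\mathrm{Fix}(\operatorname{prox}^p_{\gamma\varphi})\subseteq\mathrm{Fcrit}(\varphi)\subseteq\mathrm{Mcrit}(\varphi)$.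
   Context: $\operatorname{prox}^p_{\gamma\varphi}(x):=\operatorname{argmin}_{y}\big(\varphi(y)+\frac{1}{p\gamma}\|x-y\|^p\big)$, $\varphi^p_\gamma(x):=\inf_{y}\big(\varphi(y)+\frac{1}{p\gamma}\|x-y\|^p\big)$. $\varphi$ is high-order prox-bounded (order $p$) if $\varphi^p_\gamma(x)>-\infty$ for some $\gamma>0,x$; the supremum of such $\gamma$ is the threshold $\gamma^{\varphi,p}$. $\mathrm{Fix}(\operatorname{prox}^p_{\gamma\varphi})=\{x: x\in\operatorname{prox}^p_{\gamma\varphi}(x)\}$ (proximal fixed points). For a proper lsc $h$, $\mathrm{Fcrit}(h)=\{x\in\operatorname{dom}h:0\in\hat\partial h(x)\}$ and $\mathrm{Mcrit}(h)=\{x\in\operatorname{dom}h:0\in\partial h(x)\}$, where $\hat\partial$ and $\partial$ are the Fréchet and Mordukhovich (limiting) subdifferentials. *)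

From HB Require Import structures.
From mathcomp Require Import all_boot all_order all_algebra.
From mathcomp Require Import all_classical all_reals all_analysis.
Set Implicit Arguments. Unset Strict Implicit. Unset Printing Implicit Defensive.
Import Order.TTheory GRing.Theory Num.Theory.
Local Open Scope classical_set_scope.
Local Open Scope ring_scope.

Section Defs.
Context {R : realType} {n : nat}.
Local Notation V := 'rV[R]_n.

Definition dotv (u v : V) : R := \sum_(i < n) u ord0 i * v ord0 i.
Definition enorm (u : V) : R := Num.sqrt (dotv u u).

Definition proper_fun (f : V -> \bar R) : Prop :=
  (forall x, f x != -oo%E) /\ exists x, f x \is a fin_num.

Definition lsc (f : V -> \bar R) : Prop :=
  forall (x : V) (a : R), (a%:E < f x)%E ->
    exists2 d : R, 0 < d & forall y, enorm (y - x) < d -> (a%:E < f y)%E.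

Definition einf (f : V -> \bar R) : \bar R := ereal_inf (range f).
Definition argmin (f : V -> \bar R) : set V := [set x | forall y, (f x <= f y)%E].

Definition hcost (p gamma : R) (x y : V) : R := (enorm (x - y)) `^ p / (p * gamma).

Definition moreau (p gamma : R) (f : V -> \bar R) (x : V) : \bar R :=
  ereal_inf (range (fun y => (f y + (hcost p gamma x y)%:E)%E)).

Definition prox (p gamma : R) (f : V -> \bar R) (x : V) : set V :=
  [set y | forall z, (f y + (hcost p gamma x y)%:E <= f z + (hcost p gamma x z)%:E)%E].

Definition prox_bounded (p : R) (f : V -> \bar R) : Prop :=
  exists gamma : R, 0 < gamma /\ exists x, (-oo < moreau p gamma f x)%E.
Definition prox_threshold (p : R) (f : V -> \bar R) : \bar R :=
  ereal_sup [set gamma%:E | gamma in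
     [set gamma : R | 0 < gamma /\ exists x, (-oo < moreau p gamma f x)%E]].

Definition prox_fix (p gamma : R) (f : V -> \bar R) : set V :=
  [set x | prox p gamma f x x].

Definition frechet_subdiff (h : V -> \bar R) (x : V) : set V :=
  [set v | h x \is a fin_num /\
     forall e : R, 0 < e -> exists2 d : R, 0 < d & forall y, enorm (y - x) < d ->
       (h x + (dotv v (y - x) - e * enorm (y - x))%:E <= h y)%E].

Definition seq_cvgV (u : nat -> V) (a : V) : Prop :=
  forall e : R, 0 < e -> exists N, forall k, (N <= k)%N -> enorm (u k - a) < e.

Definition limiting_subdiff (h : V -> \bar R) (x : V) : set V :=
  [set v | h x \is a fin_num /\
     exists (xs vs : nat -> V),
       [/\ seq_cvgV xs x,
           (forall e : R, 0 < e -> exists N, forall k, (N <= k)%N ->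
              h (xs k) \is a fin_num /\ `|fine (h (xs k)) - fine (h x)| < e),
           (forall k, frechet_subdiff h (xs k) (vs k)) &
           seq_cvgV vs v]].

Definition Fcrit (h : V -> \bar R) : set V :=
  [set x | h x \is a fin_num /\ frechet_subdiff h x 0].
Definition Mcrit (h : V -> \bar R) : set V :=
  [set x | h x \is a fin_num /\ limiting_subdiff h x 0].

End Defs.

(* The envelope has the same infimum as [phi] because the penalty vanishes on
   the diagonal. If [phi x] exceeds [inf phi], lower semicontinuity keeps [phi]
   large near [x] while the penalty is bounded below away from [x], so the
   envelope at [x] also exceeds [inf phi]; hence both functions have the same
   minimizers, with no prox-boundedness needed. Since [p > 1] the penalty is
   [o(|x - y|)], so proximal fixed points are Frechet critical. Conversely, if
   [x] is Frechet critical for the envelope but [phi x] lies above it, the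
   near-minimizers [y] of the prox problem at [x] stay at a distance from [x]
   bounded below and above; moving [x] towards [y] lowers the envelope at a
   linear rate because [(1 - s) ^ p <= 1 - s], contradicting criticality. *)

From HB Require Import structures.
From mathcomp Require Import all_boot all_order all_algebra.
From mathcomp Require Import all_classical all_reals all_analysis.
From mathcomp Require Import lra ring.
Set Implicit Arguments. Unset Strict Implicit. Unset Printing Implicit Defensive.
Import Order.TTheory GRing.Theory Num.Theory.
Local Open Scope classical_set_scope.
Local Open Scope ring_scope.

Section EuclideanNorm.
Context {R : realType} {n : nat}.
Implicit Types (u v : 'rV[R]_n) (a : R).

Lemma dotv0l v : dotv 0 v = 0.
Proof. by rewrite /dotv big1 // => i _; rewrite mxE mul0r. Qed.

Lemma enorm_ge0 u : 0 <= enorm u.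
Proof. exact: sqrtr_ge0. Qed.

Lemma enorm0 : enorm (0 : 'rV[R]_n) = 0.
Proof. by rewrite /enorm dotv0l sqrtr0. Qed.

Lemma enormZ a u : enorm (a *: u) = `|a| * enorm u.
Proof.
have dotvZZ : dotv (a *: u) (a *: u) = a ^+ 2 * dotv u u.
  rewrite /dotv mulr_sumr; apply: eq_bigr => i _; rewrite !mxE; ring.
by rewrite /enorm dotvZZ sqrtrM ?sqr_ge0 // sqrtr_sqr.
Qed.

Lemma enorm_distC u v : enorm (u - v) = enorm (v - u).
Proof. by rewrite -opprB -scaleN1r enormZ normrN normr1 mul1r. Qed.

End EuclideanNorm.

Section ExtendedReals.
Context {R : realType}.
Implicit Types (a : R) (b : \bar R).

Lemma fin_num_le_EFin b a : b != -oo%E -> (b <= a%:E)%E -> b \is a fin_num.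
Proof. by case: b. Qed.

Lemma fin_num_lt b b' : b != -oo%E -> (b < b')%E -> b \is a fin_num.
Proof. by case: b => // _; rewrite ltNge leey. Qed.

Lemma EFin_lt_dense a b : (a%:E < b)%E -> exists2 r : R, a < r & (r%:E < b)%E.
Proof.
case: b => [b||] //; last by exists (a + 1); rewrite ?ltry //; lra.
by rewrite lte_fin => ab; exists ((a + b) / 2); rewrite ?lte_fin; lra.
Qed.

End ExtendedReals.

Section Minimizers.
Context {R : realType} {n : nat}.
Implicit Types (h : 'rV[R]_n -> \bar R) (x : 'rV[R]_n).

Lemma einf_le h x : (einf h <= h x)%E.
Proof. by apply: ereal_inf_lbound; exists x. Qed.

Lemma einf_argmin h x : argmin h x -> einf h = h x.
Proof.
move=> xmin; apply/le_anti; rewrite einf_le /=.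
by apply/ereal_infP => _ [y _ <-]; exact: xmin.
Qed.

Lemma proper_fin_num_of_le h x (c : 'rV[R]_n -> R) : proper_fun h ->
  (forall z, (h x <= h z + (c z)%:E)%E) -> h x \is a fin_num.
Proof.
move=> [h_nN [z z_fin]] /(_ z); rewrite -(fineK z_fin) -EFinD.
exact: fin_num_le_EFin.
Qed.

Lemma fcrit_of_approx_min h x : h x \is a fin_num ->
  (forall e : R, 0 < e -> exists2 d : R, 0 < d &
     forall y, enorm (y - x) < d -> (h x <= h y + (e * enorm (y - x))%:E)%E) ->
  Fcrit h x.
Proof.
move=> hx_fin approx; split => //; split => // e /approx[d d_gt0 near_x].
exists d => // y /near_x; rewrite dotv0l sub0r EFinN.
by rewrite leeBlDr.
Qed.

Lemma argmin_fcrit h x : h x \is a fin_num -> argmin h x -> Fcrit h x.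
Proof.
move=> hx_fin xmin; apply: fcrit_of_approx_min => // e e_gt0.
exists 1 => // y _; apply: le_trans (xmin y) (leeDl _ _).
by rewrite lee_fin mulr_ge0 ?enorm_ge0 ?ltW.
Qed.

Lemma fcrit_mcrit h : Fcrit h `<=` Mcrit h.
Proof.
move=> x [hx_fin crit]; split => //; split => //.
exists (fun=> x), (fun=> 0); split => // e e_gt0; exists 0%N => k _.
- by rewrite subrr enorm0.
- by rewrite subrr normr0.
- by rewrite subrr enorm0.
Qed.

End Minimizers.

Section Envelope.
Context {R : realType} {n : nat}.
Variables (p g : R) (phi : 'rV[R]_n -> \bar R).
Hypotheses (p_gt0 : 0 < p) (g_gt0 : 0 < g).
Implicit Types x y z : 'rV[R]_n.

Lemma hcost_ge0 x y : 0 <= hcost p g x y.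
Proof. by rewrite divr_ge0 ?powR_ge0 // mulr_ge0 ?ltW. Qed.

Lemma hcostxx x : hcost p g x x = 0.
Proof. by rewrite /hcost subrr enorm0 powR0 ?mul0r ?gt_eqF. Qed.

Lemma hcost_ge_pow (d : R) x y : 0 <= d -> d <= enorm (x - y) ->
  d `^ p / (p * g) <= hcost p g x y.
Proof.
move=> d_ge0 d_le; rewrite ler_pM2r ?invr_gt0 ?mulr_gt0 //.
by apply: ge0_ler_powR; rewrite ?nnegrE ?enorm_ge0 // ltW.
Qed.

Lemma moreau_le x y : (moreau p g phi x <= phi y + (hcost p g x y)%:E)%E.
Proof. by apply: ereal_inf_lbound; exists y. Qed.

Lemma moreau_le_fun x : (moreau p g phi x <= phi x)%E.
Proof. by have := moreau_le x x; rewrite hcostxx adde0. Qed.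

Lemma moreau_ge (a : \bar R) x :
  (forall y, (a <= phi y + (hcost p g x y)%:E)%E) -> (a <= moreau p g phi x)%E.
Proof. by move=> a_le; apply/ereal_infP => _ [y _ <-]. Qed.

Lemma einf_le_moreau x : (einf phi <= moreau p g phi x)%E.
Proof.
apply: moreau_ge => y; apply: le_trans (einf_le _ y) (leeDl _ _).
by rewrite lee_fin hcost_ge0.
Qed.

Lemma einf_moreau : einf (moreau p g phi) = einf phi.
Proof.
apply/le_anti/andP; split.
- by apply/ereal_infP => _ [y _ <-]; apply: le_trans (einf_le _ y) (moreau_le_fun y).
- by apply/ereal_infP => _ [x _ <-]; exact: einf_le_moreau.
Qed.

Lemma moreau_argmin x : argmin phi x -> moreau p g phi x = phi x.
Proof.
move=> xmin; apply/le_anti; rewrite moreau_le_fun /=.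
by rewrite -(einf_argmin xmin) einf_le_moreau.
Qed.

Lemma argmin_sub_moreau : argmin phi `<=` argmin (moreau p g phi).
Proof.
move=> x xmin y /=; rewrite moreau_argmin // -(einf_argmin xmin).
exact: einf_le_moreau.
Qed.

Lemma argmin_fcrit_moreau : proper_fun phi -> argmin phi `<=` Fcrit (moreau p g phi).
Proof.
move=> phi_proper x xmin; apply: argmin_fcrit (argmin_sub_moreau xmin).
rewrite moreau_argmin //; apply: (proper_fin_num_of_le (c := fun=> 0)) => // z.
by rewrite adde0.
Qed.

Lemma prox_fixP x :
  prox_fix p g phi x <-> forall z, (phi x <= phi z + (hcost p g x z)%:E)%E.
Proof. by rewrite /prox_fix /prox /= hcostxx adde0; split. Qed.

Lemma argmin_prox_fix : argmin phi `<=` prox_fix p g phi.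
Proof.
move=> x xmin; apply/prox_fixP => z; apply: le_trans (xmin z) (leeDl _ _).
by rewrite lee_fin hcost_ge0.
Qed.

Lemma moreau_gt_einf x : lsc phi -> einf phi \is a fin_num ->
  (einf phi < phi x)%E -> (einf phi < moreau p g phi x)%E.
Proof.
move=> phi_lsc inf_fin; rewrite -(fineK inf_fin); set m := fine _ => m_lt.
have [r mr rx] := EFin_lt_dense m_lt.
have [d d_gt0 near_x] := phi_lsc x r rx.
have pen_gt0 : 0 < d `^ p / (p * g) by rewrite divr_gt0 ?powR_gt0 ?mulr_gt0.
apply: (@lt_le_trans _ _ (Num.min r (m + d `^ p / (p * g)))%:E).
  by rewrite lte_fin lt_min mr ltrDl pen_gt0.
apply: moreau_ge => y; have [yx|yx] := ltP (enorm (y - x)) d.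
  apply: le_trans (leeDl _ _); last by rewrite lee_fin hcost_ge0.
  by apply: ltW; apply: le_lt_trans (near_x y yx); rewrite lee_fin ge_min lexx.
apply: (@le_trans _ _ (m%:E + (d `^ p / (p * g))%:E)).
  by rewrite -EFinD lee_fin ge_min lexx orbT.
apply: leeD; first by rewrite /m fineK // einf_le.
rewrite lee_fin; apply: hcost_ge_pow; [exact: ltW | by rewrite enorm_distC].
Qed.

Lemma argmin_moreau : lsc phi -> einf phi != -oo%E ->
  argmin (moreau p g phi) = argmin phi.
Proof.
move=> phi_lsc inf_nN; apply/seteqP; split; last exact: argmin_sub_moreau.
move=> x xmin; have : ~ (einf phi < phi x)%E.
  move=> inf_lt; have := moreau_gt_einf phi_lsc (fin_num_lt inf_nN inf_lt) inf_lt.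
  by rewrite -einf_moreau (einf_argmin xmin) ltxx.
by move/negP; rewrite -leNgt => x_le y; apply: le_trans x_le (einf_le _ _).
Qed.

Lemma near_minimizers_far x (M : R) : lsc phi -> (M%:E < phi x)%E ->
  exists2 del : R, 0 < del & exists2 eta : R, 0 < eta &
  forall y (b : R), phi y = b%:E -> b + hcost p g x y < M + eta ->
    del <= enorm (x - y).
Proof.
move=> phi_lsc /EFin_lt_dense[r Mr rx]; have [del del_gt0 near_x] := phi_lsc x r rx.
exists del => //; exists (r - M); first by rewrite subr_gt0.
move=> y b yb; rewrite subrKC leNgt => near_min; apply/negP.
rewrite enorm_distC => /near_x; rewrite yb lte_fin.
by have := hcost_ge0 x y; lra.
Qed.

Lemma moreau_near_minimizer x (M eta : R) : einf phi != -oo%E ->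
  moreau p g phi x = M%:E -> 0 < eta ->
  exists y (b : R), phi y = b%:E /\ b + hcost p g x y < M + eta.
Proof.
move=> inf_nN Mx eta_gt0; have : (moreau p g phi x < (M + eta)%:E)%E.
  by rewrite Mx lte_fin ltrDl.
move=> /ereal_inf_ltP[_ [y _ <-] near_min]; exists y.
move: (einf_le phi y) near_min; case: (phi y) => [b _ near_min|//|].
  by exists b; rewrite -EFinD lte_fin in near_min.
by rewrite leeNy_eq (negbTE inf_nN).
Qed.

End Envelope.

Section HighOrderEnvelope.
Context {R : realType} {n : nat}.
Variables (p g : R) (phi : 'rV[R]_n -> \bar R).
Hypotheses (p_gt1 : 1 < p) (g_gt0 : 0 < g).
Implicit Types x y z : 'rV[R]_n.

Let p_gt0 : 0 < p. Proof. exact: lt_trans ltr01 p_gt1. Qed.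

(* [t ^ p / (p g) <= e t] as soon as [t ^ (p - 1) <= e p g], whence the choice of [d]. *)
Lemma hcost_littleo (e : R) : 0 < e -> exists2 d : R, 0 < d &
  forall x y, enorm (y - x) < d -> hcost p g x y <= e * enorm (y - x).
Proof.
move=> e_gt0; have epg_gt0 : 0 < e * p * g by rewrite !mulr_gt0.
exists ((e * p * g) `^ (p - 1)^-1); first by rewrite powR_gt0.
move=> x y; rewrite /hcost (enorm_distC x y); set t := enorm (y - x) => t_lt.
have t_ge0 : 0 <= t by exact: enorm_ge0.
rewrite ler_pdivrMr ?mulr_gt0 // -(mulr_powRB1 t_ge0 p_gt0).
have -> : e * t * (p * g) = t * (e * p * g) by ring.
rewrite ler_wpM2l //.
have -> : e * p * g = ((e * p * g) `^ (p - 1)^-1) `^ (p - 1).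
  by rewrite -powRrM mulVf ?powRr1 ?ltW // gt_eqF // subr_gt0.
by apply: ge0_ler_powR; rewrite ?nnegrE ?t_ge0 ?powR_ge0 ?subr_ge0 ?ltW.
Qed.

Lemma prox_fix_fcrit : proper_fun phi -> prox_fix p g phi `<=` Fcrit phi.
Proof.
move=> phi_proper x /(prox_fixP _ _ p_gt0) fix_x.
apply: fcrit_of_approx_min => [|e /hcost_littleo[d d_gt0 small]].
  exact: proper_fin_num_of_le phi_proper fix_x.
exists d => // y /small small_y; apply: le_trans (fix_x y) _.
by apply: leeD2l; rewrite lee_fin.
Qed.

Lemma enorm_le_hcost (K : R) x y :
  hcost p g x y < K -> enorm (x - y) <= Num.max 1 (p * g * K).
Proof.
rewrite ltr_pdivrMr ?mulr_gt0 // mulrC => pow_lt.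
have [D_le1|D_gt1] := leP (enorm (x - y)) 1; first by rewrite le_max D_le1.
rewrite le_max; apply/orP; right; apply: ltW; apply: le_lt_trans pow_lt.
by rewrite le1r_powR ?ltW.
Qed.

Lemma moreau_segment_le (s : R) x y : 0 <= s <= 1 ->
  (moreau p g phi (x + s *: (y - x))
     <= phi y + ((1 - s) * hcost p g x y)%:E)%E.
Proof.
move=> /andP[s_ge0 s_le1]; apply: le_trans (moreau_le _ _ _ _ y) _.
apply: leeD2l; rewrite lee_fin /hcost mulrA.
apply: ler_wpM2r; first by rewrite invr_ge0 mulr_ge0 ?ltW.
have -> : x + s *: (y - x) - y = (1 - s) *: (x - y).
  by apply/rowP => i; rewrite !mxE; ring.
rewrite enormZ ger0_norm ?subr_ge0 //.
have [->|s_neq1] := eqVneq s 1; first by rewrite subrr !mul0r powR0 ?gt_eqF.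
apply: ge1r_powRZ; rewrite ?enorm_ge0 ?(ltW p_gt1) // subr_gt0.
by rewrite lt_neqAle s_neq1 s_le1 lerBlDr lerDl.
Qed.

Lemma moreau_near_minimizer_bounded x (M eta : R) : einf phi != -oo%E ->
  moreau p g phi x = M%:E -> 0 < eta <= 1 ->
  exists y (b : R), [/\ phi y = b%:E, b + hcost p g x y < M + eta &
    enorm (x - y) <= Num.max 1 (p * g * (M + 1 - fine (einf phi)))].
Proof.
move=> inf_nN Mx /andP[eta_gt0 eta_le1].
have [y [b [yb near_min]]] := moreau_near_minimizer inf_nN Mx eta_gt0.
exists y, b; split => //; apply: enorm_le_hcost.
have inf_le : (einf phi <= b%:E)%E by rewrite -yb einf_le.
have := inf_le; rewrite -(fineK (fin_num_le_EFin inf_nN inf_le)) lee_fin.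
have := hcost_ge0 p_gt0 g_gt0 x y; lra.
Qed.

(* Compare the Frechet lower bound at [x + s (y - x)] with the upper bound
   given by the segment towards [y]. *)
Lemma moreau_frechet_slope x (M e : R) : moreau p g phi x = M%:E ->
  frechet_subdiff (moreau p g phi) x 0 -> 0 < e ->
  exists2 d : R, 0 < d & forall y (b s : R), phi y = b%:E -> 0 <= s <= 1 ->
    s * enorm (x - y) < d ->
    s * (hcost p g x y - e * enorm (x - y)) <= b + hcost p g x y - M.
Proof.
move=> Mx [_ frechet] /frechet[d d_gt0 near_x]; exists d => // y b s yb s01 sd.
have dist_xs : enorm (x + s *: (y - x) - x) = s * enorm (x - y).
  rewrite addrAC subrr add0r enormZ (enorm_distC y x) ger0_norm //.
  by case/andP: s01.
have := near_x (x + s *: (y - x)); rewrite dist_xs => /(_ sd).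
rewrite dotv0l Mx => /le_trans/(_ (moreau_segment_le x y s01)).
by rewrite yb -!EFinD lee_fin; lra.
Qed.

Lemma fcrit_moreau_prox_fix : lsc phi -> einf phi != -oo%E ->
  Fcrit (moreau p g phi) `<=` prox_fix p g phi.
Proof.
move=> phi_lsc inf_nN x [Mx_fin crit]; apply/(prox_fixP _ _ p_gt0).
suff phix_le : (phi x <= moreau p g phi x)%E.
  by move=> z; apply: le_trans phix_le (moreau_le _ _ _ _ z).
rewrite leNgt; apply/negP; rewrite -(fineK Mx_fin); set M := fine _ => M_lt.
have Mx : moreau p g phi x = M%:E by rewrite fineK.
have [del del_gt0 [eta0 eta0_gt0 far]] := near_minimizers_far p_gt0 g_gt0 phi_lsc M_lt.
set cmin := del `^ p / (p * g).
have cmin_gt0 : 0 < cmin by rewrite /cmin divr_gt0 ?powR_gt0 ?mulr_gt0.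
set Dmax := Num.max 1 (p * g * (M + 1 - fine (einf phi))).
have Dmax_gt0 : 0 < Dmax by rewrite /Dmax lt_max ltr01.
set e := cmin / (2 * Dmax).
have e_gt0 : 0 < e by rewrite /e divr_gt0 // mulr_gt0.
have [d d_gt0 slope] := moreau_frechet_slope Mx crit e_gt0.
set s := Num.min 1 (d / (2 * Dmax)).
have s_gt0 : 0 < s by rewrite /s lt_min ltr01 divr_gt0 ?mulr_gt0 ?ltr0n.
have s_le1 : s <= 1 by rewrite /s ge_min lexx.
have s_le : s * (2 * Dmax) <= d.
  by rewrite -ler_pdivlMr ?mulr_gt0 // /s ge_min lexx orbT.
set eta := Num.min (Num.min 1 eta0) (s * cmin / 2).
have eta_gt0 : 0 < eta by rewrite /eta !lt_min ltr01 eta0_gt0 divr_gt0 // mulr_gt0.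
have [eta_le1 eta_le0 eta_le2] : [/\ eta <= 1, eta <= eta0 & eta <= s * cmin / 2].
  by rewrite /eta !ge_min !lexx !orbT.
have eta01 : 0 < eta <= 1 by rewrite eta_gt0 eta_le1.
have [y [b [yb near_min D_le]]] := moreau_near_minimizer_bounded inf_nN Mx eta01.
set c := hcost p g x y in near_min *; set D := enorm (x - y) in D_le *.
rewrite -/Dmax in D_le.
have cmin_le_c : cmin <= c.
  apply: (hcost_ge_pow p_gt0 g_gt0); first exact: ltW.
  by apply: far yb _; rewrite -/c; lra.
have eD_le : e * D <= cmin / 2.
  have -> : cmin / 2 = e * Dmax by rewrite /e; field; rewrite gt_eqF.
  by rewrite ler_wpM2l // ltW // divr_gt0 ?mulr_gt0.
have sD_lt : s * D < d.
  have := ler_wpM2l (ltW s_gt0) D_le; have := mulr_gt0 s_gt0 Dmax_gt0; lra.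
have s01 : 0 <= s <= 1 by rewrite (ltW s_gt0) s_le1.
have := slope y b s yb s01 sD_lt; rewrite -/c -/D => slope_y.
have : s * (cmin / 2) <= s * (c - e * D) by rewrite ler_wpM2l ?(ltW s_gt0) //; lra.
lra.
Qed.

End HighOrderEnvelope.

Theorem theorem2 (R : realType) (n : nat) (p : R) (phi : 'rV[R]_n -> \bar R) :
  1 < p -> proper_fun phi -> lsc phi ->
  (* (a) *)
  (forall gamma : R, 0 < gamma -> einf (moreau p gamma phi) = einf phi) /\
  (* (b) *)
  (forall gamma : R, 0 < gamma ->
     (forall x, prox p gamma phi x !=set0) -> einf phi != -oo%E ->
     argmin (moreau p gamma phi) = argmin phi) /\
  (* (c) *)
  (prox_bounded p phi -> (0%:E < prox_threshold p phi)%E -> einf phi != -oo%E ->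
     forall gamma : R, 0 < gamma -> (gamma%:E < prox_threshold p phi)%E ->
     argmin (moreau p gamma phi) = argmin phi) /\
  (* (d) *)
  (forall gamma : R, 0 < gamma ->
     [/\ argmin phi `<=` prox_fix p gamma phi,
         prox_fix p gamma phi `<=` Fcrit phi &
         Fcrit phi `<=` Mcrit phi]) /\
  (* (e) *)
  (prox_bounded p phi -> (0%:E < prox_threshold p phi)%E -> einf phi != -oo%E ->
     forall gamma : R, 0 < gamma -> (gamma%:E < prox_threshold p phi)%E ->
     [/\ argmin phi `<=` Fcrit (moreau p gamma phi),
         Fcrit (moreau p gamma phi) `<=` prox_fix p gamma phi,
         prox_fix p gamma phi `<=` Fcrit phi &
         Fcrit phi `<=` Mcrit phi]).
Proof.
move=> p_gt1 phi_proper phi_lsc; have p_gt0 : 0 < p := lt_trans ltr01 p_gt1.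
split; first by move=> g g_gt0; exact: einf_moreau.
split; first by move=> g g_gt0 _; exact: argmin_moreau.
split; first by move=> _ _ inf_nN g g_gt0 _; exact: argmin_moreau.
split=> [g g_gt0|_ _ inf_nN g g_gt0 _].
  by split; [exact: argmin_prox_fix | exact: prox_fix_fcrit | exact: fcrit_mcrit].
split; [exact: argmin_fcrit_moreau | exact: fcrit_moreau_prox_fix |
        exact: prox_fix_fcrit | exact: fcrit_mcrit].
Qed.
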